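(* There exist an alphabet $\Sigma$, a set $D\subseteq\Sigma^\omega$ of don't care words with trivial right-congruence, and a DBA $\mathcal{A}$ with informative right-congruence such that there are several pairwise non-isomorphic $D$-minimal DBAs $\mathcal{B}$ with $L(\mathcal{B})\equiv_D L(\mathcal{A})$, and such that some $D$-minimal DBA $\mathcal{B}$ with $L(\mathcal{B})\equiv_D L(\mathcal{A})$ does not have informative right-congruence.
   Context: A DBA $(\Sigma,Q,\delta,q_0,F)$ is a finite deterministic transition system (all states reachable) with $F\subseteq Q$, accepting $\alpha\in\Sigma^\omega$ iff a state of $F$ is visited infinitely often in the run on $\alpha$. $L\equiv_D L'$ means $L\setminus D=L'\setminus D$. A DBA $\mathcal{B}$ is $D$-minimal (for the language $L(\mathcal{B})$ up to $\equiv_D$) if no DBA with fewer states accepts a language $D$-equivalent to $L(\mathcal{B})$. For $L\subseteq\Sigma^\omega$, $u\sim_L v$ iff for all $\alpha\in\Sigma^\omega$: $u\alpha\in L\iff v\alpha\in L$; $D$ has trivial right-congruence if $\sim_D$ has one class. An automaton accepting $L$ has informative right-congruence if its transition system is isomorphic to the transition system induced by $\sim_L$ (states the classes $[u]$, initial $[\epsilon]$, transitions $[u]\xrightarrow{\sigma}[u\sigma]$). *)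

From mathcomp Require Import all_boot.
Set Implicit Arguments. Unset Strict Implicit. Unset Printing Implicit Defensive.

Section Automata.
Variable S : finType.

Definition oword := nat -> S.
Definition olang := oword -> Prop.

Definition oconcat (u : seq S) (a : oword) : oword :=
  fun n => if n < size u then nth (a 0) u n else a (n - size u).

Record DBA := {
  dba_Q :> finType;
  dba_delta : dba_Q -> S -> dba_Q;
  dba_q0 : dba_Q;
  dba_F : pred dba_Q;
  dba_reach : forall q : dba_Q, exists u : seq S, foldl dba_delta dba_q0 u = q
}.

Fixpoint run (A : DBA) (a : oword) (n : nat) : dba_Q A :=
  match n with
  | 0 => dba_q0 A
  | n'.+1 => dba_delta (run A a n') (a n')
  end.

Definition accepts (A : DBA) (a : oword) : Prop :=
  exists2 q : dba_Q A, dba_F q & forall N, exists2 n, N <= n & run A a n = q.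

Definition L (A : DBA) : olang := accepts A.

Definition equivD (D L1 L2 : olang) : Prop :=
  forall a, ~ D a -> (L1 a <-> L2 a).

Definition D_minimal (D : olang) (B : DBA) : Prop :=
  forall B' : DBA, equivD D (L B') (L B) -> #|dba_Q B| <= #|dba_Q B'|.

Definition rcong (Lg : olang) (u v : seq S) : Prop :=
  forall a, Lg (oconcat u a) <-> Lg (oconcat v a).

Definition trivial_rcong (Lg : olang) : Prop := forall u v, rcong Lg u v.

Record TS := { ts_state : Type; ts_init : ts_state;
               ts_step : ts_state -> S -> ts_state -> Prop }.
Arguments ts_init : clear implicits.
Arguments ts_step : clear implicits.

Definition TS_iso (T1 T2 : TS) : Prop :=
  exists f : ts_state T1 -> ts_state T2,
    bijective f /\ f (ts_init T1) = ts_init T2 /\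
    forall q a q', ts_step T1 q a q' <-> ts_step T2 (f q) a (f q').

Definition TS_of (A : DBA) : TS :=
  {| ts_state := dba_Q A; ts_init := dba_q0 A;
     ts_step := fun q a q' => q' = dba_delta q a |}.

Definition rclass (Lg : olang) (u : seq S) : seq S -> Prop := rcong Lg u.
Definition rclasses (Lg : olang) := {C : seq S -> Prop | exists u, C = rclass Lg u}.
Definition rcl (Lg : olang) (u : seq S) : rclasses Lg :=
  exist _ (rclass Lg u) (ex_intro _ u erefl).

Definition TS_rcong (Lg : olang) : TS :=
  {| ts_state := rclasses Lg; ts_init := rcl Lg [::];
     ts_step := fun C a C' => exists u, C = rcl Lg u /\ C' = rcl Lg (rcons u a) |}.

Definition informative_rcong (A : DBA) : Prop := TS_iso (TS_of A) (TS_rcong (L A)).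

Definition DBA_iso (A B : DBA) : Prop :=
  exists f : dba_Q A -> dba_Q B,
    bijective f /\ f (dba_q0 A) = dba_q0 B /\
    (forall q a, f (dba_delta q a) = dba_delta (f q) a) /\
    (forall q, dba_F (f q) = dba_F q).

End Automata.

From mathcomp Require Import all_boot.
From Stdlib Require Import Classical ClassicalEpsilon.
From Stdlib Require Import FunctionalExtensionality PropExtensionality ProofIrrelevance.
Set Implicit Arguments. Unset Strict Implicit. Unset Printing Implicit Defensive.

(* Let D be the words that are not eventually constant.  Changing a finite
   prefix does not affect membership in D, so D has trivial right-congruence,
   and two DBAs all of whose states accept 1^omega and reject 0^omega are
   D-equivalent.  A single state cannot do this, so the two-state automata
   remembering the last letter are D-minimal; their two choices of initial
   state give non-isomorphic DBAs, and their language "infinitely many 1s"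
   ignores prefixes, so they have two states but one right-congruence class.
   For A take a three-state automaton with the same behaviour on constant
   tails whose states have pairwise different residual languages; then its
   states correspond exactly to the classes of ~_L(A). *)

Section Runs.
Variables (S : finType) (A : DBA S).

Fixpoint run_from (q : A) (a : oword S) (n : nat) : A :=
  if n is n'.+1 then dba_delta (run_from q a n') (a n') else q.

Definition buchi (r : nat -> A) : Prop :=
  exists2 p : A, dba_F p & forall N, exists2 n, N <= n & r n = p.

Definition accepts_from (q : A) (a : oword S) : Prop := buchi (run_from q a).

Definition state_after (u : seq S) : A := foldl (@dba_delta _ A) (dba_q0 A) u.

Lemma buchi_shift k (r r' : nat -> A) :
  (forall n, r (k + n) = r' n) -> buchi r <-> buchi r'.
Proof.
move=> rr'; split=> -[p Fp visits]; exists p => // N.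
  have [n le_kN_n <-] := visits (k + N).
  have le_k_n : k <= n := leq_trans (leq_addr N k) le_kN_n.
  by exists (n - k); rewrite ?leq_subRL // -rr' subnKC.
have [n le_Nn <-] := visits N.
by exists (k + n); rewrite ?rr' ?(leq_trans le_Nn (leq_addl k n)).
Qed.

Lemma buchi_eventually_const K (r : nat -> A) p :
  (forall n, K <= n -> r n = p) -> buchi r <-> dba_F p.
Proof.
move=> rp; split=> [[p' Fp' visits] | Fp].
  by have [n /rp <- ->] := visits K.
by exists p => // N; exists (maxn N K); rewrite ?leq_maxl ?rp ?leq_maxr.
Qed.

Lemma acceptsE a : accepts A a <-> accepts_from (dba_q0 A) a.
Proof. by apply: (@buchi_shift 0 (run A a)); elim=> //= n ->. Qed.

Lemma run_from_addn q a k n :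
  run_from q a (k + n) = run_from (run_from q a k) (fun m => a (k + m)) n.
Proof. by elim: n => [|n IHn]; rewrite ?addn0 // addnS /= IHn. Qed.

Lemma eq_run_from q a b : a =1 b -> run_from q a =1 run_from q b.
Proof. by move=> ab; elim=> //= n ->; rewrite ab. Qed.

Lemma oconcat_addn u (a : oword S) n : oconcat u a (size u + n) = a n.
Proof. by rewrite /oconcat ltnNge leq_addr /= addKn. Qed.

Lemma run_from_oconcat_size q u a :
  run_from q (oconcat u a) (size u) = foldl (@dba_delta _ A) q u.
Proof.
elim: u q => [|x u IHu] q //; rewrite -[size _]add1n run_from_addn /= -IHu.
by apply: eq_run_from => m; rewrite /oconcat /= ltnS subSS.
Qed.

Lemma accepts_from_oconcat q u a :
  accepts_from q (oconcat u a) <-> accepts_from (foldl (@dba_delta _ A) q u) a.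
Proof.
apply: (@buchi_shift (size u)) => n; rewrite run_from_addn run_from_oconcat_size.
by apply: eq_run_from => m; rewrite oconcat_addn.
Qed.

Lemma accepts_from_cons q a :
  accepts_from q a <-> accepts_from (dba_delta q (a 0)) (fun n => a n.+1).
Proof. by apply: (@buchi_shift 1); elim=> //= n ->. Qed.

Lemma eq_L a b : a =1 b -> L A a <-> L A b.
Proof. by move=> ab; apply: (@buchi_shift 0 (run A a)); elim=> //= n ->; rewrite ab. Qed.

Lemma L_oconcat u a : L A (oconcat u a) <-> accepts_from (state_after u) a.
Proof. by rewrite /L acceptsE accepts_from_oconcat. Qed.

Lemma card_le1_L a : #|A| <= 1 -> L A a <-> dba_F (dba_q0 A).
Proof.
move=> /fintype_le1P A_triv; apply: (@buchi_eventually_const 0 (run A a)) => n _.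
exact: A_triv.
Qed.

End Runs.

Section RightCongruenceClasses.
Variables (S : finType) (Lg : olang S).

Lemma rcong_sym u v : rcong Lg u v -> rcong Lg v u.
Proof. by move=> uv a; rewrite uv. Qed.

Lemma rcong_trans u v w : rcong Lg u v -> rcong Lg v w -> rcong Lg u w.
Proof. by move=> uv vw a; rewrite uv vw. Qed.

Lemma rcl_eq u v : rcong Lg u v -> rcl Lg u = rcl Lg v.
Proof.
move=> uv; have class_uv : rclass Lg u = rclass Lg v.
  apply: functional_extensionality => w; apply: propositional_extensionality.
  by split; [exact: rcong_trans (rcong_sym uv) | exact: rcong_trans uv].
rewrite /rcl; move: (ex_intro _ u _) (ex_intro _ v _); rewrite class_uv => p p'.
by rewrite (proof_irrelevance _ p p').
Qed.

Lemma rcl_rcong u v : rcl Lg u = rcl Lg v -> rcong Lg u v.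
Proof. by move=> /(f_equal (@proj1_sig _ _)) /= class_uv; rewrite -/(rclass Lg u v) class_uv. Qed.

Lemma rclassesP (C : rclasses Lg) : exists u, C = rcl Lg u.
Proof.
case: C => P P_class; have [u P_u] := P_class; exists u.
by subst P; congr exist; apply: proof_irrelevance.
Qed.

Definition rcl_repr (C : rclasses Lg) : seq S :=
  proj1_sig (constructive_indefinite_description _ (rclassesP C)).

Lemma rcl_reprK C : rcl Lg (rcl_repr C) = C.
Proof. by rewrite /rcl_repr; case: constructive_indefinite_description. Qed.

Lemma trivial_rcong_rclasses : trivial_rcong Lg -> forall C C' : rclasses Lg, C = C'.
Proof.
move=> triv C C'; have [u ->] := rclassesP C; have [v ->] := rclassesP C'.
exact: rcl_eq.
Qed.

End RightCongruenceClasses.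

Section InformativeRightCongruence.
Variables (S : finType) (A : DBA S).

Lemma rcong_state_after u v :
  rcong (L A) u v <->
  forall a, accepts_from (state_after A u) a <-> accepts_from (state_after A v) a.
Proof. by split=> uv a; move: (uv a); rewrite !L_oconcat. Qed.

Lemma state_after_rcons u x : state_after A (rcons u x) = dba_delta (state_after A u) x.
Proof. by rewrite /state_after foldl_rcons. Qed.

Lemma trivial_rcong_not_informative :
  trivial_rcong (L A) -> 1 < #|A| -> ~ informative_rcong A.
Proof.
move=> triv A_big [f [[g fK _] _]]; move: A_big; rewrite ltnNge => /negP[].
apply/fintype_le1P => q q'.
by rewrite -(fK q) -(fK q') (trivial_rcong_rclasses triv (f q) (f q')).
Qed.

Definition reduced : Prop :=
  forall q q' : A, (forall a, accepts_from q a <-> accepts_from q' a) -> q = q'.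

Hypothesis A_reduced : reduced.

Lemma rcl_state_after u v : (rcl (L A) u = rcl (L A) v) <-> (state_after A u = state_after A v).
Proof.
split=> [class_uv | state_uv].
  by apply: A_reduced; apply/rcong_state_after/rcl_rcong.
by apply/rcl_eq/rcong_state_after; rewrite state_uv.
Qed.

Let reach (q : A) : exists u, state_after A u == q.
Proof. by have [u uq] := dba_reach q; exists u; apply/eqP. Qed.

Let to_class (q : A) : rclasses (L A) := rcl (L A) (xchoose (reach q)).
Let of_class (C : rclasses (L A)) : A := state_after A (rcl_repr C).

Let to_class_state_after u : to_class (state_after A u) = rcl (L A) u.
Proof. by apply/rcl_state_after; apply/eqP/(xchooseP (reach _)). Qed.

Let of_class_rcl u : of_class (rcl (L A) u) = state_after A u.
Proof. exact/rcl_state_after/rcl_reprK. Qed.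

Lemma reduced_informative : informative_rcong A.
Proof.
have to_classK : cancel to_class of_class.
  move=> q; have [u <-] := dba_reach q; rewrite -/(state_after A u).
  by rewrite to_class_state_after of_class_rcl.
have of_classK : cancel of_class to_class.
  by move=> C; have [u ->] := rclassesP C; rewrite of_class_rcl to_class_state_after.
exists to_class; split; first exact: Bijective to_classK of_classK.
split; first exact: (to_class_state_after [::]).
move=> q x q' /=; split=> [-> | [u [qu q'ux]]].
  have [u <-] := dba_reach q; rewrite -/(state_after A u).
  by exists u; rewrite -state_after_rcons !to_class_state_after.
rewrite -(to_classK q) -(to_classK q') qu q'ux !of_class_rcl.
exact: state_after_rcons.
Qed.

End InformativeRightCongruence.

Section EventuallyConstant.
Variable S : finType.

Definition eventually_const (a : oword S) : Prop :=
  exists N (c : S), forall n, N <= n -> a n = c.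

Definition not_eventually_const : olang S := fun a => ~ eventually_const a.

Lemma eventually_const_oconcat u a :
  eventually_const (oconcat u a) <-> eventually_const a.
Proof.
split=> -[N [c const_c]].
  exists N, c => n le_Nn; rewrite -(oconcat_addn u a n).
  by apply: const_c; apply: leq_trans le_Nn (leq_addl _ _).
exists (size u + N), c => n le_uN_n.
have le_u_n : size u <= n := leq_trans (leq_addr N _) le_uN_n.
by rewrite -(subnKC le_u_n) oconcat_addn const_c // leq_subRL.
Qed.

Lemma trivial_rcong_not_eventually_const : trivial_rcong not_eventually_const.
Proof. by move=> u v a; rewrite /not_eventually_const !eventually_const_oconcat. Qed.

Lemma L_eventually_const (X : DBA S) a N c : (forall n, N <= n -> a n = c) ->
  L X a <-> accepts_from (state_after X (mkseq a N)) (fun=> c).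
Proof.
move=> const_c; rewrite -L_oconcat; apply: eq_L => n.
rewrite /oconcat size_mkseq; case: ltnP => [lt_nN | /const_c //].
by rewrite nth_mkseq.
Qed.

Lemma equivD_eventually_const (X Y : DBA S) (P : S -> Prop) :
  (forall (q : X) c, accepts_from q (fun=> c) <-> P c) ->
  (forall (q : Y) c, accepts_from q (fun=> c) <-> P c) ->
  equivD not_eventually_const (L X) (L Y).
Proof.
move=> X_const Y_const a /NNPP[N [c const_c]].
by rewrite !(L_eventually_const _ const_c) X_const Y_const.
Qed.

End EventuallyConstant.

Arguments not_eventually_const {S}.

Lemma D_minimal_card2 (S : finType) (D : olang S) (X : DBA S) a b :
  #|X| <= 2 -> ~ D a -> ~ D b -> L X a -> ~ L X b -> D_minimal D X.
Proof.
move=> X_small Da Db Xa Xb B equiv_B; apply: (leq_trans X_small).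
rewrite leqNgt ltnS; apply/negP => B_small.
apply/Xb/(equiv_B b Db)/(card_le1_L b B_small)/(card_le1_L a B_small).
exact/(equiv_B a Da).
Qed.

Definition A3_delta (q : option bool) (x : bool) : option bool :=
  if x then (if q is None then Some false else Some true)
  else (if q is Some true then Some false else None).

Lemma A3_reach (q : option bool) : exists u, foldl A3_delta (Some true) u = q.
Proof. by case: q => [[]|]; [exists [::] | exists [:: false] | exists [:: false; false]]. Qed.

Definition A3 : DBA bool :=
  {| dba_Q := option bool; dba_delta := A3_delta; dba_q0 := Some true;
     dba_F := pred1 (Some true); dba_reach := A3_reach |}.

Lemma A3_run_const (q : A3) c n :
  run_from q (fun=> c) n.+2 = if c then Some true else None.
Proof. by elim: n => [|n /= ->]; [case: q => [[]|]; case: c | case: c]. Qed.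

Lemma A3_accepts_const (q : A3) c : accepts_from q (fun=> c) <-> c.
Proof.
have run_stable n : 2 <= n -> run_from q (fun=> c) n = if c then Some true else None.
  by case: n => [|[|n]] // _; rewrite A3_run_const.
rewrite /accepts_from (buchi_eventually_const run_stable).
by case: c {run_stable}.
Qed.

Definition alt : oword bool := odd.

Lemma A3_run_alt_accepting n :
  run_from (Some true : A3) alt n = if odd n then Some false else Some true.
Proof. by elim: n => //= n ->; rewrite /alt; case: odd. Qed.

Lemma A3_run_alt (q : A3) n :
  q != Some true -> run_from q alt n.+1 = if odd n then Some false else None.
Proof.
move=> q_nacc; elim: n => [|n /= ->]; first by case: q q_nacc => [[]|].
by rewrite /alt; case: odd.
Qed.

Lemma A3_altP (q : A3) : reflect (accepts_from q alt) (q == Some true).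
Proof.
apply: (iffP eqP) => [-> | [p p_acc visits]].
  exists (Some true) => // N; exists N.*2; first by rewrite -addnn leq_addr.
  by rewrite A3_run_alt_accepting odd_double.
apply/eqP/contraT => q_nacc; have [[|n] // _] := visits 1.
by rewrite A3_run_alt // => run_p; move: p_acc; rewrite -run_p; case: odd.
Qed.

Lemma A3_true_altP (q : A3) : reflect (accepts_from q (oconcat [:: true] alt)) (q != None).
Proof.
have -> : (q != None) = (A3_delta q true == Some true) by case: q => [[]|].
exact: equivP (A3_altP _) (iff_sym (accepts_from_oconcat _ _ _)).
Qed.

Lemma A3_reduced : reduced A3.
Proof.
move=> q q' same_residual.
have acc_q : (q == Some true) = (q' == Some true).
  by apply/A3_altP/A3_altP; case: (same_residual alt).
have ok_q : (q != None) = (q' != None).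
  by apply/A3_true_altP/A3_true_altP; case: (same_residual (oconcat [:: true] alt)).
by move: acc_q ok_q {same_residual}; case: q q' => [[]|] [[]|].
Qed.

Lemma last_letter_reach (i q : bool) : exists u, foldl (fun _ x => x) i u = q.
Proof. by exists [:: q]. Qed.

Definition last_letter (i : bool) : DBA bool :=
  {| dba_Q := bool; dba_delta := fun _ x => x; dba_q0 := i;
     dba_F := id; dba_reach := last_letter_reach i |}.

Lemma last_letter_accepts_const i (q : last_letter i) c : accepts_from q (fun=> c) <-> c.
Proof. by apply: (buchi_eventually_const (K:=1)); case. Qed.

Lemma last_letter_accepts_from i (q q' : last_letter i) a :
  accepts_from q a <-> accepts_from q' a.
Proof. by split=> /accepts_from_cons accepted; apply/accepts_from_cons. Qed.

Lemma last_letter_trivial_rcong i : trivial_rcong (L (last_letter i)).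
Proof. by move=> u v a; rewrite !L_oconcat; apply: last_letter_accepts_from. Qed.

Lemma last_letter_equivD i : equivD not_eventually_const (L (last_letter i)) (L A3).
Proof.
apply: equivD_eventually_const; [exact: last_letter_accepts_const | exact: A3_accepts_const].
Qed.

Lemma last_letter_D_minimal i : D_minimal not_eventually_const (last_letter i).
Proof.
apply: (@D_minimal_card2 _ _ _ (fun=> true) (fun=> false)).
- by rewrite card_bool.
- by apply; exists 0, true.
- by apply; exists 0, false.
- by rewrite /L acceptsE last_letter_accepts_const.
- by rewrite /L acceptsE last_letter_accepts_const.
Qed.

Lemma last_letter_not_iso : ~ DBA_iso (last_letter true) (last_letter false).
Proof. by move=> [f [_ [/= f_q0 [_ /(_ true)]]]]; rewrite f_q0. Qed.

Theorem proposition2 :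
  exists (S : finType) (D : olang S) (A : DBA S),
    0 < #|S| /\
    trivial_rcong D /\
    informative_rcong A /\
    (exists B1 B2 : DBA S,
        D_minimal D B1 /\ equivD D (L B1) (L A) /\
        D_minimal D B2 /\ equivD D (L B2) (L A) /\
        ~ DBA_iso B1 B2) /\
    (exists B : DBA S,
        D_minimal D B /\ equivD D (L B) (L A) /\ ~ informative_rcong B).
Proof.
exists bool, not_eventually_const, A3; split; first by rewrite card_bool.
split; first exact: trivial_rcong_not_eventually_const.
split; first exact: reduced_informative A3_reduced.
have last_letter_not_informative : ~ informative_rcong (last_letter true).
  apply: trivial_rcong_not_informative; first exact: last_letter_trivial_rcong.
  by rewrite card_bool.
split; [exists (last_letter true), (last_letter false) | exists (last_letter true)];
  by do ![exact: last_letter_D_minimal | exact: last_letter_equivD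
         | exact: last_letter_not_iso | split].
Qed.
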